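(* Let $P$ be a set of $n\geq 5$ points in general position in the plane and let $\mathcal{P}$ be the set of all closed segments with both endpoints in $P$. If $\mathcal{P}$ has a good-2-set, then $\mu(D(P))\geq\binom{n}{2}-8$.
   Context: General position means no three points collinear. Two segments cross if they meet in a single point interior to both; a segment is clean in $\mathcal{P}$ if no other segment of $\mathcal{P}$ crosses it. For disjoint segments $uv,xy\in\mathcal{P}$ let $\mathcal{D}(uv,xy):=\{uv,ux,uy,vx,vy,xy\}$ (a drawing of $K_4$); the two segments of $\{ux,uy,vx,vy\}$ lying in the interior of the convex hull of $\mathcal{D}(uv,xy)$ are its diagonals. $\mathcal{D}(uv,xy)$ is a good-2-set of $\mathcal{P}$ if: $uv$ and $xy$ are clean in $\mathcal{P}$; each of $uv$ and $xy$ has at least one endpoint on the boundary of the convex hull of $P$; and, letting $L$ and $R$ be the two opposite quadrants of the plane determined by the lines spanned by the two diagonals that are internally disjoint from $uv$ and $xy$, the interior of $L$ (resp. $R$) contains a segment $e_l$ (resp. $e_r$) of $\mathcal{P}$ not crossed by any segment of $\mathcal{P}\setminus\mathcal{D}(uv,xy)$. $D(P)$ is the graph with vertex set $\mathcal{P}$, two segments adjacent iff disjoint. For a graph $G$ and $U\subseteq V(G)$, two distinct vertices $x,y\in U$ are $U$-mutually visible if $G$ contains a shortest $x$-$y$ path none of whose internal vertices lies in $U$; $U$ is a mutual-visibility set if every two distinct vertices of $U$ are $U$-mutually visible. $\mu(G)$ is the maximum size of a mutual-visibility set of $G$. *)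

From HB Require Import structures.
From mathcomp Require Import all_boot all_order all_algebra.
From mathcomp Require Import boolp reals.

Set Implicit Arguments.
Unset Strict Implicit.
Unset Printing Implicit Defensive.
Import Order.TTheory GRing.Theory Num.Theory.
Local Open Scope ring_scope.

Section Graph.
Variables (T : finType) (e : rel T).

(* s = [:: v1; ...; vk] describes the walk x, v1, ..., vk with vk = y. *)
Definition walk (x y : T) (s : seq T) : bool := path e x s && (last x s == y).

Definition shortest_path (x y : T) (s : seq T) : Prop :=
  walk x y s /\ forall s', walk x y s' -> (size s <= size s')%N.

(* internal vertices of the walk x :: s are v1, ..., v(k-1) *)
Definition mutually_visible (U : {set T}) (x y : T) : Prop :=
  exists s, shortest_path x y s /\
            forall v, v \in take (size s).-1 s -> v \notin U.

Definition mutual_visibility_set (U : {set T}) : Prop :=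
  forall x y, x \in U -> y \in U -> x != y -> mutually_visible U x y.

Definition mu : nat :=
  \max_(U : {set T} | `[< mutual_visibility_set U >]) #|U|.
End Graph.

Section Geometry.
Variable R : realType.
Notation pt := (R * R)%type.

Definition det (a b c : pt) : R :=
  (b.1 - a.1) * (c.2 - a.2) - (b.2 - a.2) * (c.1 - a.1).

Definition on_seg (a b z : pt) : Prop :=
  exists t : R, 0 <= t /\ t <= 1 /\
    z = (a.1 + t * (b.1 - a.1), a.2 + t * (b.2 - a.2)).

Definition on_open_seg (a b z : pt) : Prop :=
  exists t : R, 0 < t /\ t < 1 /\
    z = (a.1 + t * (b.1 - a.1), a.2 + t * (b.2 - a.2)).

Definition interior_pt (S : pt -> Prop) (z : pt) : Prop :=
  exists eps : R, 0 < eps /\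
    forall w : pt, `|w.1 - z.1| < eps -> `|w.2 - z.2| < eps -> S w.
Definition closure_pt (S : pt -> Prop) (z : pt) : Prop :=
  forall eps : R, 0 < eps ->
    exists w : pt, S w /\ `|w.1 - z.1| < eps /\ `|w.2 - z.2| < eps.
Definition boundary_pt (S : pt -> Prop) (z : pt) : Prop :=
  closure_pt S z /\ ~ interior_pt S z.

Variable n : nat.
Variable p : 'I_n -> pt.

Definition in_hull (A : {set 'I_n}) (z : pt) : Prop :=
  exists w : 'I_n -> R,
    (forall i, 0 <= w i) /\ (forall i, i \notin A -> w i = 0) /\
    \sum_i w i = 1 /\
    z.1 = \sum_i w i * (p i).1 /\ z.2 = \sum_i w i * (p i).2.

Definition general_position : Prop :=
  forall i j k : 'I_n, i != j -> j != k -> i != k -> det (p i) (p j) (p k) != 0.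

(* The segments of calP: unordered pairs {i, j}, represented as i < j. *)
Definition segment := {ij : 'I_n * 'I_n | (ij.1 < ij.2)%N}.
Definition e1 (s : segment) : 'I_n := (sval s).1.
Definition e2 (s : segment) : 'I_n := (sval s).2.

Definition segP (s : segment) (z : pt) : Prop := on_seg (p (e1 s)) (p (e2 s)) z.

Definition seg_disjoint (s t : segment) : Prop := forall z, ~ (segP s z /\ segP t z).

Definition crosses (s t : segment) : Prop :=
  exists z, (forall w, (segP s w /\ segP t w) <-> w = z) /\
    z <> p (e1 s) /\ z <> p (e2 s) /\ z <> p (e1 t) /\ z <> p (e2 t).

Definition clean (s : segment) : Prop := forall t, ~ crosses t s.

Definition on_hull_boundary (z : pt) : Prop := boundary_pt (in_hull setT) z.

Definition Dverts (s1 s2 : segment) : {set 'I_n} :=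
  [set e1 s1; e2 s1; e1 s2; e2 s2].

Definition in_D (s1 s2 f : segment) : bool :=
  (e1 f \in Dverts s1 s2) && (e2 f \in Dverts s1 s2).

(* (a, b) is one of ux, uy, vx, vy and lies in the interior of the
   convex hull of D(uv, xy) (i.e. its relative interior does) *)
Definition diagonal (s1 s2 : segment) (a b : 'I_n) : Prop :=
  ((a == e1 s1) || (a == e2 s1)) && ((b == e1 s2) || (b == e2 s2)) /\
  forall z, on_open_seg (p a) (p b) z -> interior_pt (in_hull (Dverts s1 s2)) z.

Definition quadrant (a1 b1 a2 b2 : 'I_n) (sg1 sg2 : bool) (z : pt) : Prop :=
  (if sg1 then 0 < det (p a1) (p b1) z else det (p a1) (p b1) z < 0) /\
  (if sg2 then 0 < det (p a2) (p b2) z else det (p a2) (p b2) z < 0).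

Definition good_side (s1 s2 : segment) (Q : pt -> Prop) : Prop :=
  (forall z, Q z -> ~ segP s1 z /\ ~ segP s2 z) /\
  exists el : segment, (forall z, segP el z -> Q z) /\
    forall f : segment, ~~ in_D s1 s2 f -> ~ crosses f el.

Definition good2set (s1 s2 : segment) : Prop :=
  seg_disjoint s1 s2 /\ clean s1 /\ clean s2 /\
  (on_hull_boundary (p (e1 s1)) \/ on_hull_boundary (p (e2 s1))) /\
  (on_hull_boundary (p (e1 s2)) \/ on_hull_boundary (p (e2 s2))) /\
  exists a1 b1 a2 b2 : 'I_n,
    diagonal s1 s2 a1 b1 /\ diagonal s1 s2 a2 b2 /\ (a1, b1) != (a2, b2) /\
    exists sg1 sg2 : bool,
      good_side s1 s2 (quadrant a1 b1 a2 b2 sg1 sg2) /\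
      good_side s1 s2 (quadrant a1 b1 a2 b2 (~~ sg1) (~~ sg2)).

Definition has_good2set : Prop := exists s1 s2 : segment, good2set s1 s2.

Definition D_rel : rel segment := fun s t => `[< seg_disjoint s t >].

End Geometry.

From mathcomp Require Import all_boot all_order all_algebra.
From mathcomp Require Import boolp reals.
From mathcomp Require Import ring lra.

(* Let D(S1, S2) be the good-2-set and e_l, e_r the segments in its two
   opposite quadrants, and let U be the set of segments other than these
   eight.  Two intersecting segments f, g of U always have a common neighbour
   in D(P) among S1, S2, e_l, e_r: none of these four is crossed by f or g, so
   any of them sharing no endpoint with f and g is disjoint from both.  If f
   and g together touched all four, f would join S1 to one of e_l, e_r and g
   would join S2 to the other; but the two diagonal lines put S1 and S2 on
   opposite closed sides and e_l, e_r strictly inside opposite quadrants, so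
   one of the two lines separates f from g.  Hence U is a mutual-visibility
   set of size at least C(n, 2) - 8. *)

Set Implicit Arguments.
Unset Strict Implicit.
Unset Printing Implicit Defensive.
Import Order.TTheory GRing.Theory Num.Theory.
Local Open Scope ring_scope.

Section MutualVisibility.
Variables (T : finType) (e : rel T).

Lemma leq_card_mu (U : {set T}) : mutual_visibility_set e U -> (#|U| <= mu e)%N.
Proof.
move=> mvU; rewrite /mu.
exact: (leq_bigmax_cond (P := fun U => `[< mutual_visibility_set e U >])
                        (F := fun U => #|U|) U (asboolT mvU)).
Qed.

Lemma mutual_visibility_set_common_nbr (U : {set T}) :
  (forall x y, x \in U -> y \in U -> x != y -> ~~ e x y ->
     exists2 h, h \notin U & e x h && e h y) ->
  mutual_visibility_set e U.
Proof.
move=> common x y xU yU xy.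
have walk_gt0 s : walk e x y s -> (0 < size s)%N.
  by case: s => //; rewrite /walk /= => /eqP eq_xy; rewrite eq_xy eqxx in xy.
have [exy | nexy] := boolP (e x y).
  exists [:: y]; split=> [|v]; last by rewrite in_nil.
  by split=> [|s /walk_gt0 //]; rewrite /walk /= exy eqxx.
have [h hU /andP[exh ehy]] := common x y xU yU xy nexy.
exists [:: h; y]; split=> [|v]; last by rewrite inE => /eqP ->.
split=> [|[|z [|z' s]] //]; first by rewrite /walk /= exh ehy eqxx.
  by move/walk_gt0.
by rewrite /walk /= andbT => /andP[exz /eqP zy]; rewrite -zy exz in nexy.
Qed.

End MutualVisibility.

Section Segments.
Variable n : nat.
Implicit Types (f g h : segment n) (i w a : 'I_n).

Definition ends f : {set 'I_n} := [set e1 f; e2 f].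

Lemma in_ends i f : (i \in ends f) = (i == e1 f) || (i == e2 f).
Proof. exact: in_set2. Qed.

Definition touches f g : bool := (e1 f \in ends g) || (e2 f \in ends g).

Definition has_ends f w a : Prop := (e1 f = w /\ e2 f = a) \/ (e1 f = a /\ e2 f = w).

Lemma e1_neq_e2 f : e1 f != e2 f.
Proof. by case: f => [[i j] /= ij]; rewrite /e1 /e2 /= neq_ltn ij. Qed.

Lemma card_ends f : #|ends f| = 2%N.
Proof. by rewrite cards2 e1_neq_e2. Qed.

Lemma ends_inj : injective ends.
Proof.
move=> [[i j] ij] [[k l] kl] /= /setP eq_ends.
have := eq_ends i; have := eq_ends j; move=> {eq_ends}.
rewrite /ends /e1 /e2 /= !in_set2 !eqxx orbT /=.
move=> /esym/orP[] /eqP jE /esym/orP[] /eqP iE; apply: val_inj => /=; subst => //.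
all: by move: ij kl; rewrite ?ltnn // => lt_lk; rewrite ltnNge ltnW.
Qed.

Lemma card_segment : #|{: segment n}| = 'C(n, 2).
Proof.
rewrite -[n in 'C(n, _)]card_ord -card_draws -(card_imset _ ends_inj).
apply: eq_card => A; rewrite inE; apply/imsetP/idP => [[f _ ->]|].
  by rewrite card_ends.
case/cards2P => i [j [ij ->]].
have [lt_ij|lt_ji|eq_ij] := ltngtP i j.
- by exists (exist (fun ij : 'I_n * 'I_n => (ij.1 < ij.2)%N) (i, j) lt_ij).
- exists (exist (fun ij : 'I_n * 'I_n => (ij.1 < ij.2)%N) (j, i) lt_ji) => //.
  by rewrite /ends /e1 /e2 /= setUC.
- by rewrite (val_inj eq_ij) eqxx in ij.
Qed.

Lemma DvertsE (s1 s2 : segment n) : Dverts s1 s2 = ends s1 :|: ends s2.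
Proof. by apply/setP => i; rewrite !inE orbA. Qed.

Lemma in_Dverts (s1 s2 : segment n) i :
  (i \in Dverts s1 s2) = (i \in ends s1) || (i \in ends s2).
Proof. by rewrite DvertsE inE. Qed.

Lemma in_D_l (s1 s2 : segment n) : in_D s1 s2 s1.
Proof. by rewrite /in_D !in_Dverts !in_ends !eqxx !orbT. Qed.

Lemma in_D_r (s1 s2 : segment n) : in_D s1 s2 s2.
Proof. by rewrite /in_D !in_Dverts !in_ends !eqxx !orbT. Qed.

Lemma card_in_D (s1 s2 : segment n) : (#|[set f | in_D s1 s2 f]| <= 6)%N.
Proof.
rewrite -(card_imset _ ends_inj).
apply: (@leq_trans #|[set A : {set 'I_n} | A \subset Dverts s1 s2 & #|A| == 2%N]|).
  apply/subset_leq_card/subsetP => A /imsetP[f]; rewrite inE => /andP[e1D e2D] ->.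
  rewrite inE card_ends eqxx andbT.
  by apply/subsetP => i; rewrite in_ends => /orP[] /eqP ->.
rewrite cards_draws (@leq_trans 'C(4, 2)) // leq_bin2l // DvertsE.
by apply: leq_trans (leq_card_setU _ _) _; rewrite !card_ends.
Qed.

Lemma card_in_D_setU2 (s1 s2 : segment n) el er :
  (#|[set f | in_D s1 s2 f] :|: [set el; er]| <= 8)%N.
Proof.
apply: leq_trans (leq_card_setU _ _) _.
by rewrite -[8%N]/(6 + 2)%N leq_add ?card_in_D // cards2; case: (_ != _).
Qed.

Lemma touchesC f g : touches f g = touches g f.
Proof.
rewrite /touches !in_ends !(eq_sym (e1 g)) !(eq_sym (e2 g)).
by case: (e1 f == e1 g) (e1 f == e2 g) (e2 f == e1 g) (e2 f == e2 g) => [] [] [] [].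
Qed.

Lemma touches_common i f g : i \in ends f -> i \in ends g -> touches f g.
Proof. by rewrite /touches in_ends => /orP[] /eqP <- ->; rewrite ?orbT. Qed.

Lemma has_endsP i f : i \in ends f -> exists a, has_ends f i a.
Proof.
by rewrite in_ends => /orP[] /eqP ->; [exists (e2 f); left | exists (e1 f); right].
Qed.

Lemma touchesP f h : touches f h -> exists w a, has_ends f w a /\ w \in ends h.
Proof.
by case/orP => fh; [exists (e1 f), (e2 f); split; first left
                   | exists (e2 f), (e1 f); split; first right].
Qed.

Lemma has_ends_ends f w a : has_ends f w a -> ends f = [set w; a].
Proof. by rewrite /ends; case=> [[-> ->]|[-> ->]] //; rewrite setUC. Qed.

Lemma has_ends_touches f w a h :
  has_ends f w a -> touches f h = (w \in ends h) || (a \in ends h).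
Proof. by rewrite /touches; case=> [[-> ->]|[-> ->]] //; rewrite orbC. Qed.

Lemma has_ends_in_D (s1 s2 : segment n) f w a : has_ends f w a ->
  in_D s1 s2 f = (w \in Dverts s1 s2) && (a \in Dverts s1 s2).
Proof. by rewrite /in_D; case=> [[-> ->]|[-> ->]] //; rewrite andbC. Qed.

End Segments.

Section Geometry.
Variable R : realType.
Local Notation pt := (R * R)%type.
Local Notation lerp A B t := (A.1 + t * (B.1 - A.1), A.2 + t * (B.2 - A.2)).
Implicit Types (A B P Q z : pt) (c t : R).

Definition seg_affine (l : pt -> R) :=
  forall A B t, l (lerp A B t) = l A + t * (l B - l A).

Lemma det_lerp A B P Q t :
  det A B (lerp P Q t) = det A B P + t * (det A B Q - det A B P).
Proof. by rewrite /det /=; ring. Qed.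

Lemma det_affine c A B : seg_affine (fun z => c * det A B z).
Proof. by move=> P Q t; rewrite det_lerp; ring. Qed.

Lemma seg_affineN l : seg_affine l -> seg_affine (fun z => - l z).
Proof. by move=> affl A B t; rewrite affl; ring. Qed.

Lemma lerp0 A B : lerp A B 0 = A.
Proof. by case: A => a1 a2 /=; congr pair; ring. Qed.

Lemma lerp1 A B : lerp A B 1 = B.
Proof. by case: B => b1 b2 /=; congr pair; ring. Qed.

Lemma on_seg_l A B : on_seg A B A.
Proof. by exists 0; rewrite lerp0; split; [|split; first exact: ler01]. Qed.

Lemma on_seg_r A B : on_seg A B B.
Proof. by exists 1; rewrite lerp1; split; [exact: ler01|]. Qed.

Lemma on_seg_sym A B z : on_seg A B z -> on_seg B A z.
Proof.
case=> t [t0 [t1 ->]]; exists (1 - t); split; [lra | split; first lra].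
by congr pair; ring.
Qed.

Lemma on_seg_pos l A B z : seg_affine l -> 0 <= l A -> 0 < l B ->
  on_seg A B z -> 0 < l z \/ z = A.
Proof.
move=> affl lA lB [t [t0 [t1 ->]]].
have [->|t_neq0] := eqVneq t 0; first by right; rewrite lerp0.
have t_gt0 : 0 < t by rewrite lt_neqAle eq_sym t_neq0.
by left; rewrite affl; nra.
Qed.

Lemma on_seg_separated l A B A' B' z : seg_affine l -> A != A' ->
  0 <= l A -> 0 < l B -> l A' <= 0 -> l B' < 0 ->
  on_seg A B z -> on_seg A' B' z -> False.
Proof.
move=> affl AA' lA lB lA' lB' zAB zAB'.
have lA'N : 0 <= - l A' by rewrite oppr_ge0.
have lB'N : 0 < - l B' by rewrite oppr_gt0.
case: (on_seg_pos affl lA lB zAB) => [lz|zA];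
  case: (on_seg_pos (seg_affineN affl) lA'N lB'N zAB') => [lzN|zA'].
- lra.
- by move: lz; rewrite zA'; lra.
- by move: lzN; rewrite zA; lra.
- by move/eqP: AA'; rewrite -zA -zA'.
Qed.

Lemma interior_leaves_halfplane (S : pt -> Prop) A B z c :
  A != B -> c != 0 -> interior_pt S z ->
  exists2 q, S q & c * det A B q < c * det A B z.
Proof.
move=> AB c0 [eps [eps0 Sball]].
set d1 := B.1 - A.1; set d2 := B.2 - A.2.
have d_neq0 : (d1 != 0) || (d2 != 0).
  apply: contraNT AB; rewrite negb_or !negbK !subr_eq0 => /andP[/eqP e1 /eqP e2].
  by apply/eqP; rewrite [A]surjective_pairing -e1 -e2 -surjective_pairing.
have sqr_gt0 (x : R) : x != 0 -> 0 < x ^+ 2.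
  by move=> x0; rewrite lt0r sqrf_eq0 x0 sqr_ge0.
have d_gt0 : 0 < d1 ^+ 2 + d2 ^+ 2.
  have := sqr_ge0 d1; have := sqr_ge0 d2.
  by case/orP: d_neq0 => /sqr_gt0; lra.
pose K := 1 + `|c * d1| + `|c * d2|.
have K_gt0 : 0 < K by rewrite /K; move: (normr_ge0 (c * d1)) (normr_ge0 (c * d2)); lra.
pose delta := eps / K.
have delta_gt0 : 0 < delta by rewrite divr_gt0.
have deltaK : delta * K = eps by rewrite divfK // gt_eqF.
have delta_small x : `|c * x| < K -> `|delta * (c * x)| < eps.
  by move=> cxK; rewrite normrM gtr0_norm // -deltaK ltr_pM2l.
(* step from z along the normal (c d2, - c d1) of AB, on which c * det A B decreases *)
exists (z.1 + delta * (c * d2), z.2 - delta * (c * d1)).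
  apply: Sball; rewrite /=.
    rewrite addrAC subrr add0r delta_small // /K.
    by move: (normr_ge0 (c * d1)); lra.
  rewrite addrAC subrr add0r normrN delta_small // /K.
  by move: (normr_ge0 (c * d2)); lra.
have -> : c * det A B (z.1 + delta * (c * d2), z.2 - delta * (c * d1)) =
          c * det A B z - delta * (c ^+ 2 * (d1 ^+ 2 + d2 ^+ 2)).
  by rewrite /det /d1 /d2 /=; ring.
by rewrite ltrBlDr ltrDl mulr_gt0 // mulr_gt0 // sqr_gt0.
Qed.

Definition bsign (b : bool) : R := if b then 1 else -1.

Lemma bsign_neq0 b : bsign b != 0.
Proof. by case: b; rewrite /bsign ?oppr_eq0 oner_eq0. Qed.

Variables (n : nat) (p : 'I_n -> pt).
Hypothesis p_inj : injective p.
Hypothesis p_gp : general_position p.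
Implicit Types (f g h : segment n) (i w a : 'I_n).

Lemma quadrantE a1 b1 a2 b2 sg1 sg2 z :
  quadrant p a1 b1 a2 b2 sg1 sg2 z <->
  0 < bsign sg1 * det (p a1) (p b1) z /\ 0 < bsign sg2 * det (p a2) (p b2) z.
Proof.
by rewrite /quadrant /bsign; case: sg1; case: sg2; rewrite ?mul1r ?mulN1r ?oppr_gt0.
Qed.

Lemma quadrantNE a1 b1 a2 b2 sg1 sg2 z :
  quadrant p a1 b1 a2 b2 (~~ sg1) (~~ sg2) z <->
  bsign sg1 * det (p a1) (p b1) z < 0 /\ bsign sg2 * det (p a2) (p b2) z < 0.
Proof.
by rewrite /quadrant /bsign; case: sg1; case: sg2; rewrite ?mul1r ?mulN1r ?oppr_lt0.
Qed.

Lemma segP_ends f i : i \in ends f -> segP p f (p i).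
Proof. by rewrite in_ends => /orP[] /eqP ->; [exact: on_seg_l | exact: on_seg_r]. Qed.

Lemma segP_has_ends f w a z : has_ends f w a -> segP p f z -> on_seg (p w) (p a) z.
Proof. by move=> + fz; case=> [[<- <-] //|[<- <-]]; exact: on_seg_sym. Qed.

Lemma segP_det f z : segP p f z -> det (p (e1 f)) (p (e2 f)) z = 0.
Proof. by case=> t [_ [_ ->]]; rewrite det_lerp /det; ring. Qed.

Lemma seg_disjoint_sym f g : seg_disjoint p f g -> seg_disjoint p g f.
Proof. by move=> fg z [gz fz]; exact: fg z (conj fz gz). Qed.

Lemma ends_disjoint f g i : seg_disjoint p f g -> i \in ends f -> i \notin ends g.
Proof.
by move=> fg /segP_ends fi; apply/negP => /segP_ends gi; exact: fg (p i) (conj fi gi).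
Qed.

Lemma has_ends_separated (l : pt -> R) f g w a w' b : seg_affine l -> w != w' ->
  has_ends f w a -> has_ends g w' b ->
  0 <= l (p w) -> 0 < l (p a) -> l (p w') <= 0 -> l (p b) < 0 -> seg_disjoint p f g.
Proof.
move=> affl ww' hf hg lw la lw' lb z [/(segP_has_ends hf) fz /(segP_has_ends hg) gz].
by apply: (on_seg_separated affl _ lw la lw' lb fz gz); rewrite (inj_eq p_inj).
Qed.

Lemma det_off_seg f i : i \notin ends f -> det (p (e1 f)) (p (e2 f)) (p i) != 0.
Proof.
by rewrite in_ends negb_or => /andP[i1 i2]; apply: p_gp; rewrite 1?e1_neq_e2 1?eq_sym.
Qed.

Lemma segP_vertex f i : segP p f (p i) -> i \in ends f.
Proof. by move/segP_det/eqP; apply: contraTT => /det_off_seg. Qed.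

Lemma segP_meet_unique f g z q : e1 g \notin ends f ->
  segP p f z -> segP p g z -> segP p f q -> segP p g q -> q = z.
Proof.
move=> /det_off_seg d1_neq0 /segP_det fz [s [_ [_ zE]]] /segP_det fq [s' [_ [_ qE]]].
have [ss' | ss'] := eqVneq s' s; first by rewrite qE zE ss'.
move: fz fq d1_neq0; rewrite zE qE !det_lerp.
set d1 := det _ _ (p (e1 g)); set d2 := det _ _ (p (e2 g)) => fz fq.
have : (s - s') * (d2 - d1) = 0 by rewrite mulrBl; lra.
move/eqP; rewrite mulf_eq0 subr_eq0 eq_sym (negbTE ss') subr_eq0 /= => /eqP d21.
by rewrite d21 subrr mulr0 addr0 in fz; rewrite fz eqxx.
Qed.

Lemma disjoint_of_not_crosses f g :
  ~~ touches f g -> ~ crosses p f g -> seg_disjoint p f g.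
Proof.
move=> fg ncross z [fz gz]; apply: ncross; exists z.
have gf : ~~ touches g f by rewrite touchesC.
have off h k i : ~~ touches h k -> i \in ends h -> segP p k (p i) -> False.
  by move=> hk ih /segP_vertex ik; rewrite (touches_common ih ik) in hk.
have e1f : e1 f \in ends f by rewrite in_ends eqxx.
have e2f : e2 f \in ends f by rewrite in_ends eqxx orbT.
have e1g : e1 g \in ends g by rewrite in_ends eqxx.
have e2g : e2 g \in ends g by rewrite in_ends eqxx orbT.
have e1g_off : e1 g \notin ends f by apply: contraNN fg => /touches_common /(_ e1g).
split=> [q|]; first by split=> [[fq gq]|->]; [exact: segP_meet_unique fz gz fq gq|].
by do ![split] => zE; rewrite zE in fz gz;
  [ exact: off fg e1f gz | exact: off fg e2f gz
  | exact: off gf e1g fz | exact: off gf e2g fz ].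
Qed.

Lemma hull_halfplane (A : {set 'I_n}) P Q c z :
  (forall i, i \in A -> 0 <= c * det P Q (p i)) -> in_hull p A z -> 0 <= c * det P Q z.
Proof.
move=> halfA [w [w0 [wA [w1 [z1 z2]]]]].
have -> : c * det P Q z = \sum_i w i * (c * det P Q (p i)).
  have -> : \sum_i w i * (c * det P Q (p i)) =
      \sum_i (c * (Q.1 - P.1) * (w i * (p i).2) - c * (Q.2 - P.2) * (w i * (p i).1)
              - c * ((Q.1 - P.1) * P.2 - (Q.2 - P.2) * P.1) * w i).
    by apply: eq_bigr => i _; rewrite /det; ring.
  by rewrite !sumrB -!mulr_sumr w1 -z1 -z2 /det; ring.
apply: sumr_ge0 => i _; have [iA|iA] := boolP (i \in A).
  exact: mulr_ge0 (w0 i) (halfA i iA).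
by rewrite wA ?mul0r.
Qed.

Lemma diagonal_not_supporting (s1 s2 : segment n) a b c :
  a != b -> c != 0 -> diagonal p s1 s2 a b ->
  ~ (forall i, i \in Dverts s1 s2 -> 0 <= c * det (p a) (p b) (p i)).
Proof.
move=> ab c0 [_ int_diag] supp.
have m_open : on_open_seg (p a) (p b) (lerp (p a) (p b) (1 / 2)).
  by exists (1 / 2); split; [lra | split; first lra].
have pa_pb : p a != p b by rewrite (inj_eq p_inj).
have [q hull_q] := interior_leaves_halfplane pa_pb c0 (int_diag _ m_open).
have := hull_halfplane supp hull_q; rewrite det_lerp /det; lra.
Qed.

Definition seg_mid f : pt := lerp (p (e1 f)) (p (e2 f)) (1 / 2).

Lemma segP_mid f : segP p f (seg_mid f).
Proof. by exists (1 / 2); split; [lra | split; first lra]. Qed.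

Definition weakly_separates (l : pt -> R) s1 s2 :=
  (forall i, i \in ends s1 -> 0 <= l (p i)) /\ (forall i, i \in ends s2 -> l (p i) <= 0).

Lemma diagonal_separates (s1 s2 : segment n) a b c :
  seg_disjoint p s1 s2 -> c != 0 -> diagonal p s1 s2 a b ->
  let l z := c * det (p a) (p b) z in
  weakly_separates l s1 s2 /\ 0 < l (seg_mid s1) \/
  weakly_separates l s2 s1 /\ l (seg_mid s1) < 0.
Proof.
move=> disj c0 dg l; have [/andP[a1 b2] _] := dg.
rewrite -in_ends in a1; rewrite -in_ends in b2.
have ab : a != b by apply: contraNneq _ (ends_disjoint disj a1) => ->.
have [u hu] := has_endsP a1; have [x hx] := has_endsP b2.
have la : l (p a) = 0 by rewrite /l /det; ring.
have lb : l (p b) = 0 by rewrite /l /det; ring.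
have val1 i : i \in ends s1 -> l (p i) = 0 \/ l (p i) = l (p u).
  by rewrite (has_ends_ends hu) in_set2 => /orP[] /eqP ->; [left|right].
have val2 i : i \in ends s2 -> l (p i) = 0 \/ l (p i) = l (p x).
  by rewrite (has_ends_ends hx) in_set2 => /orP[] /eqP ->; [left|right].
have mid : l (seg_mid s1) = (l (p (e1 s1)) + l (p (e2 s1))) / 2.
  by rewrite /seg_mid /l det_lerp; field.
have {}mid : l (seg_mid s1) = l (p u) / 2.
  by rewrite mid; case: hu => [[-> ->]|[-> ->]]; rewrite la ?addr0 ?add0r.
have not_both k : k != 0 -> ~ (0 <= k * l (p u) /\ 0 <= k * l (p x)).
  move=> k0 [ku kx]; apply: (diagonal_not_supporting ab (mulf_neq0 k0 c0) dg) => i.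
  rewrite in_Dverts -mulrA => iD; change (0 <= k * l (p i)); move: iD.
  by case/orP => [/val1|/val2] [] ->; rewrite ?mulr0.
have := not_both 1; rewrite oner_eq0 !mul1r => /(_ isT) not_nonneg.
have := not_both (-1); rewrite oppr_eq0 oner_eq0 !mulN1r !oppr_ge0 => /(_ isT) not_nonpos.
have [[u_pos x_neg]|[u_neg x_pos]] :
    (0 < l (p u) /\ l (p x) < 0) \/ (l (p u) < 0 /\ 0 < l (p x)) by lra.
- left; rewrite mid; split; last lra; split.
    by move=> i /val1 [] ->; lra.
  by move=> i /val2 [] ->; lra.
- right; rewrite mid; split; last lra; split.
    by move=> i /val2 [] ->; lra.
  by move=> i /val1 [] ->; lra.
Qed.

Section CommonNeighbour.
Variables (S1 S2 el er : segment n) (lp ln : pt -> R).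
Hypotheses (lp_affine : seg_affine lp) (ln_affine : seg_affine ln).
Hypothesis S1_S2_disjoint : seg_disjoint p S1 S2.
Hypothesis lp_separates : weakly_separates lp S1 S2.
Hypothesis ln_separates : weakly_separates ln S2 S1.
Hypothesis el_pos : forall i, i \in ends el -> 0 < lp (p i) /\ 0 < ln (p i).
Hypothesis er_neg : forall i, i \in ends er -> lp (p i) < 0 /\ ln (p i) < 0.

Lemma touches_S1_not_S2 f : ~~ in_D S1 S2 f -> touches f S1 -> ~~ touches f S2.
Proof.
move=> fD /touchesP[w [a [hf w1]]].
rewrite (has_ends_in_D _ _ hf) !in_Dverts w1 /= in fD.
rewrite (has_ends_touches _ hf) (negbTE (ends_disjoint S1_S2_disjoint w1)) /=.
by case/norP: fD.
Qed.

Lemma touching_all_disjoint f g : touches f S1 -> touches g S2 ->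
  touches f el || touches g el -> touches f er || touches g er -> seg_disjoint p f g.
Proof.
move=> /touchesP[w [a [hf w1]]] /touchesP[w' [b [hg w'2]]].
have w_el : w \notin ends el.
  by apply/negP => /el_pos[_]; have := ln_separates.2 w w1; lra.
have w'_el : w' \notin ends el.
  by apply/negP => /el_pos[]; have := lp_separates.2 w' w'2; lra.
have w_er : w \notin ends er.
  by apply/negP => /er_neg[]; have := lp_separates.1 w w1; lra.
have w'_er : w' \notin ends er.
  by apply/negP => /er_neg[_]; have := ln_separates.1 w' w'2; lra.
rewrite !(has_ends_touches _ hf) !(has_ends_touches _ hg).
rewrite (negbTE w_el) (negbTE w'_el) (negbTE w_er) (negbTE w'_er) /=.
have ww' : w != w' by apply: contraNneq _ (ends_disjoint S1_S2_disjoint w1) => ->.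
case/orP=> [/el_pos[lpa lna] | /el_pos[lpb lnb]];
  case/orP=> [/er_neg[lpa' lna'] | /er_neg[lpb' lnb']].
- lra.
- exact: (has_ends_separated lp_affine ww' hf hg (lp_separates.1 w w1) lpa
          (lp_separates.2 w' w'2) lpb').
- apply: seg_disjoint_sym (has_ends_separated ln_affine _ hg hf
          (ln_separates.1 w' w'2) lnb (ln_separates.2 w w1) lna').
  by rewrite eq_sym.
- lra.
Qed.

Hypotheses (S1_clean : clean p S1) (S2_clean : clean p S2).
Hypothesis el_uncrossed : forall f, ~~ in_D S1 S2 f -> ~ crosses p f el.
Hypothesis er_uncrossed : forall f, ~~ in_D S1 S2 f -> ~ crosses p f er.

Lemma common_neighbour f g :
  ~~ in_D S1 S2 f -> ~~ in_D S1 S2 g -> ~ seg_disjoint p f g ->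
  exists2 h, h \in [set S1; S2; el; er] & seg_disjoint p f h /\ seg_disjoint p h g.
Proof.
move=> fD gD fg.
have uncrossed h k : h \in [set S1; S2; el; er] -> ~~ in_D S1 S2 k -> ~ crosses p k h.
  move=> + kD; rewrite !inE -!orbA => /or4P [] /eqP ->;
  [exact: S1_clean | exact: S2_clean | exact: el_uncrossed | exact: er_uncrossed].
have [/exists_inP[h hX /andP[fh gh]] | /exists_inPn touched] :=
  boolP [exists h in [set S1; S2; el; er], ~~ touches f h && ~~ touches g h].
  exists h => //; split; first exact: disjoint_of_not_crosses (uncrossed h f hX fD).
  exact/seg_disjoint_sym/(disjoint_of_not_crosses gh (uncrossed h g hX gD)).
have {}touched h : h \in [set S1; S2; el; er] -> touches f h || touches g h.
  by move/touched; rewrite negb_and !negbK.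
have [inS1 inS2 inel iner] :
    [/\ S1 \in [set S1; S2; el; er], S2 \in [set S1; S2; el; er],
        el \in [set S1; S2; el; er] & er \in [set S1; S2; el; er]].
  by rewrite !inE !eqxx !orbT.
case: fg; have [fS1|gS1] := orP (touched S1 inS1).
  have gS2 : touches g S2.
    by have := touched S2 inS2; rewrite (negbTE (touches_S1_not_S2 fD fS1)).
  exact: touching_all_disjoint fS1 gS2 (touched el inel) (touched er iner).
have fS2 : touches f S2.
  by have := touched S2 inS2; rewrite (negbTE (touches_S1_not_S2 gD gS1)) orbF.
by apply/seg_disjoint_sym/touching_all_disjoint; rewrite 1?orbC ?touched.
Qed.

Lemma mutual_visibility_outside :
  mutual_visibility_set (D_rel p) (~: ([set f | in_D S1 S2 f] :|: [set el; er])).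
Proof.
apply: mutual_visibility_set_common_nbr => f g + + _ fg.
rewrite !inE !negb_or => /andP[fD _] /andP[gD _].
have [h hX [fh hg]] := common_neighbour fD gD (fun fg' => negP fg (asboolT fg')).
exists h; last by rewrite /D_rel !asboolT.
move: hX; rewrite !inE negbK -!orbA => /or4P [] /eqP ->;
  by rewrite ?in_D_l ?in_D_r ?eqxx ?orbT.
Qed.

End CommonNeighbour.

Lemma good2set_mutual_visibility S1 S2 : good2set p S1 S2 ->
  exists el er : segment n,
    mutual_visibility_set (D_rel p) (~: ([set f | in_D S1 S2 f] :|: [set el; er])).
Proof.
case=> disj [cl1 [cl2 [_ [_ [a1 [b1 [a2 [b2 [dg1 [dg2 [_ [sg1 [sg2 [GS GS']]]]]]]]]]]]]].
case: GS GS' => [Qmiss [el [elQ ncl]]] [Q'miss [er [erQ ncr]]]; exists el, er.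
pose l1 z := bsign sg1 * det (p a1) (p b1) z.
pose l2 z := bsign sg2 * det (p a2) (p b2) z.
have el_pos i : i \in ends el -> 0 < l1 (p i) /\ 0 < l2 (p i).
  by move/segP_ends/elQ/quadrantE.
have er_neg i : i \in ends er -> l1 (p i) < 0 /\ l2 (p i) < 0.
  by move/segP_ends/erQ/quadrantNE.
have [aff1 aff2] : seg_affine l1 /\ seg_affine l2 by split; apply: det_affine.
have mid_S1 := segP_mid S1.
case: (diagonal_separates disj (bsign_neq0 sg1) dg1) => -[sep1 m1];
  case: (diagonal_separates disj (bsign_neq0 sg2) dg2) => -[sep2 m2].
- by case: (Qmiss _ (proj2 (quadrantE _ _ _ _ _ _ _) (conj m1 m2))) => /(_ mid_S1).
- exact: (mutual_visibility_outside aff1 aff2 disj sep1 sep2 el_pos er_neg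
            cl1 cl2 ncl ncr).
- apply: (mutual_visibility_outside aff2 aff1 disj sep2 sep1 _ _ cl1 cl2 ncl ncr).
    by move=> i /el_pos[].
  by move=> i /er_neg[].
- by case: (Q'miss _ (proj2 (quadrantNE _ _ _ _ _ _ _) (conj m1 m2))) => /(_ mid_S1).
Qed.

End Geometry.

Theorem proposition13 (R : realType) (n : nat) (p : 'I_n -> R * R) :
  (5 <= n)%N -> injective p -> general_position p -> has_good2set p ->
  ('C(n, 2) - 8 <= mu (D_rel p))%N.
Proof.
move=> _ p_inj p_gp [S1 [S2 good]].
have [el [er mvU]] := good2set_mutual_visibility p_inj p_gp good.
apply: leq_trans (leq_card_mu mvU).
rewrite -card_segment -(cardsC ([set f | in_D S1 S2 f] :|: [set el; er])).
by rewrite leq_subLR leq_add2r card_in_D_setU2.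
Qed.
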